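(* Let $G=(V,E)$ be a finite, simple, connected graph with $|V|\geq 3$, let $\mathcal{T}\subset V$ be a twin class of $G$ (of any size), and let $d\in\mathrm{Der}(\mathcal{A}(G))$ with $d(e_i)=\sum_{k\in V}d_{ik}e_k$. Then: (i) $d_{ik}=d_{ki}=0$ for all $i\in\mathcal{T}$ and $k\in V\setminus\mathcal{T}$; (ii) $d_{ii}=0$ for all $i\in\mathcal{T}$; (iii) $d_{\ell\ell}=0$ for all $\ell\in\mathcal{N}(\mathcal{T})$; (iv) $d_{ij}=-d_{ji}$ for all $i,j\in\mathcal{T}$ with $i\neq j$.
   Context: Throughout, $\mathbb{K}$ is a field of characteristic $0$. A graph $G=(V,E)$ has vertex set $V=\{1,\dots,n\}$ and is assumed finite, simple (no loops, no multiple edges) and connected. $\mathcal{N}(i)$ denotes the set of neighbors of vertex $i$, and for $U\subset V$, $\mathcal{N}(U)=\{j\in V: j\in\mathcal{N}(i)\text{ for some } i\in U\}$. $(a_{ij})$ is the adjacency matrix ($a_{ij}=1$ if $i,j$ are adjacent, $0$ otherwise). The evolution algebra $\mathcal{A}(G)$ is the $\mathbb{K}$-algebra with basis $\{e_i: i\in V\}$ and product $e_i\cdot e_i=\sum_{k\in V}a_{ik}e_k=\sum_{k\in\mathcal{N}(i)}e_k$ and $e_i\cdot e_j=0$ for $i\neq j$. A derivation of $\mathcal{A}(G)$ is a linear map $d:\mathcal{A}(G)\to\mathcal{A}(G)$ with $d(u\cdot v)=d(u)\cdot v+u\cdot d(v)$ for all $u,v$; $\mathrm{Der}(\mathcal{A}(G))$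 is the space of derivations, and for $d$ in it we write $d(e_i)=\sum_{k\in V}d_{ik}e_k$. Two vertices $i,j$ are twins if $\mathcal{N}(i)=\mathcal{N}(j)$; this is an equivalence relation whose classes are called twin classes. *)

From HB Require Import structures.
From mathcomp Require Import all_boot all_order all_algebra.
Set Implicit Arguments. Unset Strict Implicit. Unset Printing Implicit Defensive.
Import GRing.Theory.
Local Open Scope ring_scope.

Definition simple_graph (n : nat) (e : rel 'I_n) : Prop :=
  (forall i j, e i j = e j i) /\ (forall i, ~~ e i i).

Definition connected_graph (n : nat) (e : rel 'I_n) : Prop :=
  forall i j, connect e i j.

Definition nbhd (n : nat) (e : rel 'I_n) (i : 'I_n) : {set 'I_n} :=
  [set k | e i k].
Definition nbhdS (n : nat) (e : rel 'I_n) (U : {set 'I_n}) : {set 'I_n} :=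
  [set j | [exists i in U, e i j]].

Definition twins (n : nat) (e : rel 'I_n) (i j : 'I_n) : bool :=
  nbhd e i == nbhd e j.

Definition is_twin_class (n : nat) (e : rel 'I_n) (T : {set 'I_n}) : Prop :=
  exists i, T = [set j | twins e i j].

(* The evolution algebra A(G): underlying space K^n = 'rV[K]_n, with basis
   e_i = delta_mx 0 i, adjacency a_ik = (e i k)%:R, and product
   (u . v)_k = sum_i u_i v_i a_ik  (i.e. e_i.e_i = sum_k a_ik e_k, e_i.e_j = 0). *)
Definition evbasis (K : fieldType) (n : nat) (i : 'I_n) : 'rV[K]_n :=
  delta_mx 0 i.

Definition evmul (K : fieldType) (n : nat) (e : rel 'I_n) (u v : 'rV[K]_n)
  : 'rV[K]_n :=
  \row_k \sum_i u 0 i * v 0 i * (e i k)%:R.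

Definition is_derivation (K : fieldType) (n : nat) (e : rel 'I_n)
  (d : 'rV[K]_n -> 'rV[K]_n) : Prop :=
  (forall (a : K) (u v : 'rV[K]_n), d (a *: u + v) = a *: d u + d v) /\
  (forall u v, d (evmul e u v) = evmul e (d u) v + evmul e u (d v)).

Definition dcoef (K : fieldType) (n : nat) (d : 'rV[K]_n -> 'rV[K]_n)
  (i k : 'I_n) : K :=
  d (evbasis K i) 0 k.

From mathcomp Require Import all_boot all_algebra.

(* Comparing coefficients of e_m in the Leibniz rule for e_i e_j gives
   d_ij a_jm + d_ji a_im = 0 when i <> j, and sum_k a_ik d_km = 2 d_ii a_im.
   The first identity, with m adjacent to exactly one of i and k, kills d_ik
   and d_ki for non-twins i, k; with m a common neighbour of i and j it makes
   d antisymmetric, in particular on T and on N(T).  The second makes d_ii a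
   constant delta on T and d_ll a constant epsilon on N(T); summing it over T
   (resp. N(T)) and cancelling the antisymmetric part yields delta = 2 epsilon
   and epsilon = 2 delta, so both vanish in characteristic 0. *)

Set Implicit Arguments.
Unset Strict Implicit.
Unset Printing Implicit Defensive.

Import GRing.Theory.
Local Open Scope ring_scope.

Lemma mulrnI_pchar0 (K : fieldType) (c : nat) :
  [pchar K] =i pred0 -> (0 < c)%N -> injective (fun x : K => x *+ c).
Proof.
move=> /pcharf0P K0 c_gt0 x y /eqP; rewrite -subr_eq0 -mulrnBl -mulr_natr.
by rewrite mulf_eq0 K0 eqn0Ngt c_gt0 orbF subr_eq0 => /eqP.
Qed.

Section AntisymmetricSum.

Variables (K : fieldType) (I : finType) (A : {set I}) (g : I -> I -> K).
Hypothesis K0 : [pchar K] =i pred0.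
Hypothesis g_antisym : {in A &, forall i k, i != k -> g k i = - g i k}.

(* Off the diagonal the double sum equals its own opposite. *)
Lemma sum_antisym : \sum_(i in A) \sum_(k in A) g k i = \sum_(i in A) g i i.
Proof.
apply: (mulrnI_pchar0 K0 (isT : (0 < 2)%N)); rewrite /= !mulr2n.
rewrite [in LHS in _ + LHS = _]exchange_big -!big_split /=.
apply: eq_bigr => i iA; rewrite -big_split /= (bigD1 i) //= big1 ?addr0 //.
by move=> k /andP[kA ki]; rewrite g_antisym ?addNr // eq_sym.
Qed.

Lemma antisym_diag_eq_colsum c s x : x \in A ->
  {in A, forall i, g i i = c} -> {in A, forall i, \sum_(k in A) g k i = s} ->
  c = s.
Proof.
move=> xA gc gs; have A_gt0 : (0 < #|A|)%N by apply/card_gt0P; exists x.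
apply: (mulrnI_pchar0 K0 A_gt0); rewrite /= -!sumr_const.
by rewrite -(eq_bigr _ gc) -sum_antisym (eq_bigr _ gs).
Qed.

End AntisymmetricSum.

Section Derivation.

Variables (K : fieldType) (n : nat) (e : rel 'I_n) (d : 'rV[K]_n -> 'rV[K]_n).
Hypothesis d_der : is_derivation e d.
Local Notation a i k := ((e i k)%:R : K).

Lemma evmul_deltar u j m : evmul e u (evbasis K j) 0 m = u 0 j * a j m.
Proof.
rewrite mxE (bigD1 j) //= big1 ?addr0; first by rewrite mxE !eqxx mulr1.
by move=> k /negbTE kj; rewrite mxE kj andbF mulr0 mul0r.
Qed.

Lemma evmul_deltal u j m : evmul e (evbasis K j) u 0 m = u 0 j * a j m.
Proof.
rewrite mxE (bigD1 j) //= big1 ?addr0; first by rewrite mxE !eqxx mul1r.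
by move=> k /negbTE kj; rewrite mxE kj andbF !mul0r.
Qed.

Lemma derivation_coef u m : d u 0 m = \sum_k u 0 k * dcoef d k m.
Proof.
have [d_lin _] := d_der.
have dD u1 u2 : d (u1 + u2) = d u1 + d u2.
  by have := d_lin 1 u1 u2; rewrite !scale1r.
have d0 : d 0 = 0 by apply: (addrI (d 0)); rewrite -dD !addr0.
have dZ c u1 : d (c *: u1) = c *: d u1.
  by rewrite -[_ *: u1]addr0 d_lin d0 addr0.
rewrite {1}(row_sum_delta u) (big_morph d dD d0) summxE.
by apply: eq_bigr => k _; rewrite dZ mxE.
Qed.

(* The coefficient of e_m in d(e_i e_j) = d(e_i) e_j + e_i d(e_j). *)
Lemma dcoef_leibniz i j m :
  dcoef d i j * a j m + dcoef d j i * a i m =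
  (i == j)%:R * \sum_k a i k * dcoef d k m.
Proof.
have /(congr1 (fun u : 'rV_n => u 0 m)) :=
  (proj2 d_der) (evbasis K i) (evbasis K j).
rewrite mxE evmul_deltar evmul_deltal derivation_coef => <-.
rewrite mulr_sumr; apply: eq_bigr => k _.
by rewrite evmul_deltal mxE eqxx eq_sym mulrA.
Qed.

Lemma dcoef_leibniz_neq i j m : i != j ->
  dcoef d i j * a j m + dcoef d j i * a i m = 0.
Proof. by move=> /negbTE ij; rewrite dcoef_leibniz ij mul0r. Qed.

Lemma sum_nbr_dcoef i m :
  e i m -> \sum_(k | e i k) dcoef d k m = dcoef d i i *+ 2.
Proof.
move=> eim; have := dcoef_leibniz i i m.
rewrite eqxx eim mul1r mulr1 -mulr2n => ->; rewrite big_mkcond.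
by apply: eq_bigr => k _; case: (e i k); rewrite ?mul1r ?mul0r.
Qed.

Lemma dcoef_antisym_common_nbr l m x : l != m -> e l x -> e m x ->
  dcoef d l m = - dcoef d m l.
Proof.
move=> lm elx emx; apply/eqP; rewrite -addr_eq0.
by have := dcoef_leibniz_neq x lm; rewrite elx emx !mulr1 => ->.
Qed.

Lemma dcoef_separated i k m k' : e i m -> ~~ e k m -> e k k' ->
  dcoef d i k = 0 /\ dcoef d k i = 0.
Proof.
move=> eim /negbTE ekm ekk'.
have ik : i != k by apply: contraTneq eim => ->; rewrite ekm.
have dki : dcoef d k i = 0.
  by have := dcoef_leibniz_neq m ik; rewrite eim ekm mulr0 add0r mulr1.
split=> //; have := dcoef_leibniz_neq k' ik.
by rewrite ekk' dki mul0r addr0 mulr1.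
Qed.

End Derivation.

Lemma connected_has_nbr (n : nat) (e : rel 'I_n) :
  (1 < n)%N -> connected_graph e -> forall i, exists j, e i j.
Proof.
move=> n_gt1 e_conn i.
have [j]: exists j, j \in [set~ i].
  by apply/card_gt0P; rewrite cardsC1 card_ord -ltnS prednK // ltnW.
rewrite in_setC1 => ji; case/connectP: (e_conn i j) => [[|x p]] /=.
  by move=> _ /eqP; rewrite (negbTE ji).
by case/andP=> eix _ _; exists x.
Qed.

Section TwinClass.

Variables (K : fieldType) (n : nat) (e : rel 'I_n) (d : 'rV[K]_n -> 'rV[K]_n).
Variables (i0 : 'I_n) (T : {set 'I_n}).
Hypothesis K0 : [pchar K] =i pred0.
Hypothesis e_sym : symmetric e.
Hypothesis has_nbr : forall i, exists j, e i j.
Hypothesis d_der : is_derivation e d.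
Hypothesis defT : T = [set j | twins e i0 j].

Local Notation N := (nbhdS e T).

Lemma twin_class_adj i m : i \in T -> e i m = e i0 m.
Proof.
by rewrite defT inE => /eqP /setP /(_ m); rewrite !inE => ->.
Qed.

Lemma twin_class_sep k : k \notin T -> exists m, e i0 m != e k m.
Proof.
rewrite defT inE => /eqP ki0; apply/existsP; rewrite -negb_forall.
apply/negP => /forallP eq_nbr; apply: ki0.
by apply/setP => m; rewrite !inE (eqP (eq_nbr m)).
Qed.

Lemma mem_twin_class_nbhdS l : (l \in N) = e i0 l.
Proof.
rewrite inE; apply/existsP/idP => [[j /andP[jT]] | ei0l].
  by rewrite twin_class_adj.
by exists i0; rewrite ei0l andbT defT inE /twins eqxx.
Qed.

Lemma dcoef_twin_class_out i k : i \in T -> k \notin T ->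
  dcoef d i k = 0 /\ dcoef d k i = 0.
Proof.
move=> iT /twin_class_sep[m]; rewrite -(twin_class_adj m iT).
have [i' ei'] := has_nbr i; have [k' ek'] := has_nbr k.
case eim: (e i m); case ekm: (e k m) => // _.
  exact: (dcoef_separated d_der eim (negbT ekm) ek').
by have [] := dcoef_separated d_der ekm (negbT eim) ei'.
Qed.

Lemma dcoef_twin_class_antisym i j : i \in T -> j \in T -> i != j ->
  dcoef d i j = - dcoef d j i.
Proof.
move=> iT jT ij; have [m eim] := has_nbr i.
apply: (dcoef_antisym_common_nbr d_der ij eim).
by rewrite (twin_class_adj _ jT) -(twin_class_adj _ iT).
Qed.

Lemma dcoef_nbhdS_antisym l m : l \in N -> m \in N -> l != m ->
  dcoef d l m = - dcoef d m l.
Proof.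
rewrite !mem_twin_class_nbhdS => el em lm.
by apply: (dcoef_antisym_common_nbr d_der lm (x := i0)); rewrite e_sym.
Qed.

Lemma sum_nbhdS_dcoef i m : i \in T -> m \in N ->
  \sum_(k in N) dcoef d k m = dcoef d i i *+ 2.
Proof.
move=> iT; rewrite mem_twin_class_nbhdS -(twin_class_adj m iT) => eim.
rewrite -(sum_nbr_dcoef d_der eim); apply: eq_bigl => k.
by rewrite mem_twin_class_nbhdS twin_class_adj.
Qed.

(* N(l) contains T, and its members k outside T have d_ki = 0. *)
Lemma sum_twin_class_dcoef l i : l \in N -> i \in T ->
  \sum_(k in T) dcoef d k i = dcoef d l l *+ 2.
Proof.
rewrite mem_twin_class_nbhdS => el iT.
have eli : e l i by rewrite e_sym twin_class_adj.
rewrite -(sum_nbr_dcoef d_der eli) [RHS]big_mkcond [LHS]big_mkcond.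
apply: eq_bigr => k _; case: (boolP (k \in T)) => kT.
  by rewrite e_sym twin_class_adj // el.
by case: (e l k) => //; rewrite (dcoef_twin_class_out iT kT).2.
Qed.

Lemma dcoef_diag_twin_class :
  {in T, forall i, dcoef d i i = 0} /\ {in N, forall l, dcoef d l l = 0}.
Proof.
have i0T : i0 \in T by rewrite defT inE /twins eqxx.
have [l0 ei0l0] := has_nbr i0.
have l0N : l0 \in N by rewrite mem_twin_class_nbhdS.
set delta := dcoef d i0 i0; set eps := dcoef d l0 l0.
have dT : {in T, forall i, dcoef d i i = delta}.
  move=> i iT; apply: (mulrnI_pchar0 K0 (isT : (0 < 2)%N)) => /=.
  by rewrite -!(sum_nbhdS_dcoef _ l0N).
have dN : {in N, forall l, dcoef d l l = eps}.
  move=> l lN; apply: (mulrnI_pchar0 K0 (isT : (0 < 2)%N)) => /=.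
  by rewrite -!(sum_twin_class_dcoef _ i0T).
have delta_eps : delta = eps *+ 2.
  apply: (antisym_diag_eq_colsum K0 _ i0T dT) => [i j iT jT ij | i iT].
    by rewrite dcoef_twin_class_antisym // eq_sym.
  by rewrite (sum_twin_class_dcoef l0N iT).
have eps_delta : eps = delta *+ 2.
  apply: (antisym_diag_eq_colsum K0 _ l0N dN) => [l m lN mN lm | m mN].
    by rewrite dcoef_nbhdS_antisym // eq_sym.
  by rewrite (sum_nbhdS_dcoef i0T mN).
have delta0 : delta = 0.
  have delta4 : delta *+ 4 = delta by rewrite [RHS]delta_eps eps_delta -mulrnA.
  apply: (mulrnI_pchar0 K0 (isT : (0 < 3)%N)) => /=; rewrite mul0rn.
  by apply: (addrI delta); rewrite -mulrS delta4 addr0.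
split=> [i /dT -> // | l /dN ->].
by rewrite eps_delta delta0 mul0rn.
Qed.

End TwinClass.

Theorem lemma3p6 (K : fieldType) (n : nat) (e : rel 'I_n)
  (d : 'rV[K]_n -> 'rV[K]_n) (T : {set 'I_n}) :
  [pchar K] =i pred0 ->
  (3 <= n)%N ->
  simple_graph e ->
  connected_graph e ->
  is_twin_class e T ->
  is_derivation e d ->
  [/\ (forall i k, i \in T -> k \notin T -> dcoef d i k = 0 /\ dcoef d k i = 0),
      (forall i, i \in T -> dcoef d i i = 0),
      (forall l, l \in nbhdS e T -> dcoef d l l = 0) &
      (forall i j, i \in T -> j \in T -> i != j -> dcoef d i j = - dcoef d j i)].
Proof.
move=> K0 n_ge3 [e_sym _] e_conn [i0 defT] d_der.
have has_nbr := connected_has_nbr (ltnW n_ge3) e_conn.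
have [diagT diagN] := dcoef_diag_twin_class K0 e_sym has_nbr d_der defT.
split=> //.
- exact: (dcoef_twin_class_out has_nbr d_der defT).
- exact: (dcoef_twin_class_antisym has_nbr d_der defT).
Qed.
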